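(* Let $k=6$, $p\in\mathbb{S}^n$, $R\in(0,\pi/2)$, $B_R=\{q:\mathbf{d}_p(q)\le R\}$, $y\in\partial B_R$, and $\gamma:[R,\pi]\to\mathbb{S}^n$ the unit-speed minimizing geodesic from $y$ to $-p$ with $\mathbf{d}_p(\gamma(s))=s$. Let $\boldsymbol f=(f_1,f_2)$ be the solution on $(0,\pi)$ of \[\boldsymbol f'=\frac{1}{\sin s}\begin{pmatrix}-3\cos s&3\cos s\\ \cos R-\cos s&\cos s-\cos R\end{pmatrix}\boldsymbol f,\qquad \boldsymbol f(R)\sin^4R=\cos R\,(3,2),\] let $h(s):=f_2(s)\sin^3s$, and define on $B_R\setminus\{y\}$ the vector field $Z=\Psi_y+\int_R^\pi h(s)\Psi_{\gamma(s)}\,ds$. Then at every point of $\partial B_R\setminus\{y\}$, \[-5\tan R\,\langle Z,\nabla\mathbf{d}_p\rangle=1+\int_R^\pi h(s)\,ds.\]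
   Context: $\mathbb{S}^n$ is the unit round sphere with Levi-Civita connection $\nabla$; $\mathbf{d}_q$ is geodesic distance from $q$. With $k=6$: $I_k(r)=\int_0^r\sin^{k-1}s\,ds$, $\varphi(t)=I_k(t)\sin^{1-k}t$ for $t\in(0,\pi)$, $\varphi(0)=0$, $\Phi_q=(\varphi\circ\mathbf{d}_q)\nabla\mathbf{d}_q$ on $\mathbb{S}^n\setminus\{-q\}$, and $\Psi_q:=\Phi_{-q}$ on $\mathbb{S}^n\setminus\{q\}$. *)

From Stdlib Require Import Reals Lra.
From Coquelicot Require Import Coquelicot.
Open Scope R_scope.

(** Points of R^{n+1} are represented as [nat -> R] whose coordinates of
    index > n vanish; [dot n] is the Euclidean inner product on coordinates 0..n. *)
Definition vec := nat -> R.

Definition dot (n : nat) (x y : vec) : R := sum_f_R0 (fun i => x i * y i) n.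

Definition on_sphere (n : nat) (x : vec) : Prop :=
  (forall i, (n < i)%nat -> x i = 0) /\ dot n x x = 1.

Definition vopp (x : vec) : vec := fun i => - x i.

Definition gdist (n : nat) (q x : vec) : R := acos (dot n q x).

Definition ebasis (i : nat) : vec := fun j => if Nat.eqb i j then 1 else 0.

Definition vnormalize (n : nat) (x : vec) : vec := fun i => x i / sqrt (dot n x x).

(** Riemannian gradient (Levi-Civita / round metric) of a function f on S^n at x:
    the Euclidean gradient of its 0-homogeneous extension F(z) = f(z/|z|),
    which at points of the sphere is tangent and equals grad f. *)
Definition sgrad (n : nat) (f : vec -> R) (x : vec) : vec :=
  fun i => if Nat.leb i n then
             Derive (fun t => f (vnormalize n (fun j => x j + t * ebasis i j))) 0
           else 0.

Definition I6 (r : R) : R := RInt (fun s => sin s ^ 5) 0 r.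

Definition phi6 (t : R) : R :=
  if Req_EM_T t 0 then 0 else I6 t / sin t ^ 5.

Definition Phi (n : nat) (q : vec) (x : vec) : vec :=
  fun i => phi6 (gdist n q x) * sgrad n (gdist n q) x i.

Definition Psi (n : nat) (q : vec) (x : vec) : vec := Phi n (vopp q) x.

Definition Zfield (n : nat) (y : vec) (gamma : R -> vec) (h : R -> R) (Rr : R)
  (x : vec) : vec :=
  fun i => Psi n y x i + RInt (fun s => h s * Psi n (gamma s) x i) Rr PI.

From Stdlib Require Import Reals Lia Lra Psatz FunctionalExtensionality.
From Coquelicot Require Import Coquelicot.
Open Scope R_scope.

(* Everything is explicit in the plane of [p] and [y]: the geodesic is
   [gamma s = cos s p + sin s e], so at a boundary point [x] one has
   [<gamma s, x> = cos R cos s + a sin s] for a constant [a], while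
   [Psi_q x = Q (<q, x>) (q - <q, x> x)] and [grad d_p x = (cos R x - p) / sin R].  Hence
   [<Z, grad d_p>] is [Q (<x, y>)] times an explicit factor plus [int_R^pi h w] for a rational
   function [w] of [cos s] and [sin s].  The ODE for [f] is exactly what makes
   [W = sin^4 s / 15 (f1 / (1 - <gamma s, x>) + f2 / (1 - <gamma s, x>)^2)] a primitive of
   [h (w - cos R / 5)]; [W] vanishes at [pi] because [f = O (1 / sin^2 s)] there, and [W R] is fixed
   by [f R].  What remains is a rational identity in [<x, y>]. *)

Definition vcomb (a : R) (u : vec) (b : R) (v : vec) : vec := fun i => a * u i + b * v i.

Lemma dot_sym n u v : dot n u v = dot n v u.
Proof. apply sum_eq; intros; ring. Qed.

Lemma dot_vcomb_l n a u b v w :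
  dot n (vcomb a u b v) w = a * dot n u w + b * dot n v w.
Proof.
  unfold dot, vcomb. rewrite !scal_sum, <- sum_plus. apply sum_eq; intros; ring.
Qed.

Lemma dot_vcomb_r n a u b v w :
  dot n w (vcomb a u b v) = a * dot n w u + b * dot n w v.
Proof. rewrite dot_sym, dot_vcomb_l, (dot_sym n u), (dot_sym n v). reflexivity. Qed.

Lemma dot_scal_l n c u w : dot n (fun i => c * u i) w = c * dot n u w.
Proof. unfold dot. rewrite scal_sum. apply sum_eq; intros; ring. Qed.

Lemma dot_vopp_l n u v : dot n (vopp u) v = - dot n u v.
Proof.
  transitivity (dot n (fun i => -1 * u i) v); [apply sum_eq; intros; unfold vopp; ring|].
  rewrite dot_scal_l. ring.
Qed.

Lemma dot_add_l n u v w : dot n (fun i => u i + v i) w = dot n u w + dot n v w.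
Proof. unfold dot. rewrite <- sum_plus. apply sum_eq; intros; ring. Qed.

Lemma dot_self_ge0 n u : 0 <= dot n u u.
Proof. apply cond_pos_sum; intros; apply Rle_0_sqr. Qed.

Lemma dot_self_eq0 n u : dot n u u = 0 -> forall i, (i <= n)%nat -> u i = 0.
Proof.
  induction n as [|n IH]; unfold dot in *; simpl; intros H i Hi.
  - assert (i = 0%nat) by lia; subst. apply Rsqr_0_uniq; exact H.
  - pose proof (dot_self_ge0 n u) as Hn; unfold dot in Hn.
    pose proof (Rle_0_sqr (u (S n))) as HS; unfold Rsqr in HS.
    destruct (Nat.eq_dec i (S n)) as [->|Hne].
    + apply Rsqr_0_uniq; unfold Rsqr; lra.
    + apply IH; [lra | lia].
Qed.

Lemma dot_sub_self n u v :
  dot n (vcomb 1 u (-1) v) (vcomb 1 u (-1) v) = dot n u u - 2 * dot n u v + dot n v v.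
Proof. rewrite !dot_vcomb_l, !dot_vcomb_r, (dot_sym n v u). ring. Qed.

Lemma dot_add_self n u v :
  dot n (vcomb 1 u 1 v) (vcomb 1 u 1 v) = dot n u u + 2 * dot n u v + dot n v v.
Proof. rewrite !dot_vcomb_l, !dot_vcomb_r, (dot_sym n v u). ring. Qed.

Lemma sphere_dot_bounds n u v :
  on_sphere n u -> on_sphere n v -> -1 <= dot n u v <= 1.
Proof.
  intros [_ Hu] [_ Hv].
  pose proof (dot_self_ge0 n (vcomb 1 u (-1) v)) as Hm.
  pose proof (dot_self_ge0 n (vcomb 1 u 1 v)) as Hp.
  rewrite dot_sub_self in Hm; rewrite dot_add_self in Hp. lra.
Qed.

Lemma sphere_eq_of_coords n u v :
  on_sphere n u -> on_sphere n v -> (forall i, (i <= n)%nat -> u i = v i) -> u = v.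
Proof.
  intros [Hu _] [Hv _] H. apply functional_extensionality; intros i.
  destruct (Nat.le_gt_cases i n); [now apply H | now rewrite Hu, Hv].
Qed.

Lemma sphere_dot_eq1 n u v : on_sphere n u -> on_sphere n v -> dot n u v = 1 -> u = v.
Proof.
  intros Hu Hv H. apply (sphere_eq_of_coords n); auto. intros i Hi.
  assert (Hd : dot n (vcomb 1 u (-1) v) (vcomb 1 u (-1) v) = 0).
  { rewrite dot_sub_self, (proj2 Hu), (proj2 Hv). lra. }
  pose proof (dot_self_eq0 n _ Hd i Hi). unfold vcomb in *. lra.
Qed.

Lemma sphere_dot_eqm1 n u v :
  on_sphere n u -> on_sphere n v -> dot n u v = -1 -> forall i, (i <= n)%nat -> u i = - v i.
Proof.
  intros Hu Hv H i Hi.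
  assert (Hd : dot n (vcomb 1 u 1 v) (vcomb 1 u 1 v) = 0).
  { rewrite dot_add_self, (proj2 Hu), (proj2 Hv). lra. }
  pose proof (dot_self_eq0 n _ Hd i Hi). unfold vcomb in *. lra.
Qed.

Lemma cos_gdist n u v : on_sphere n u -> on_sphere n v -> cos (gdist n u v) = dot n u v.
Proof. intros Hu Hv. apply cos_acos, sphere_dot_bounds; assumption. Qed.

Lemma on_sphere_vcomb n a u b v :
  on_sphere n u -> on_sphere n v -> dot n u v = 0 -> a ^ 2 + b ^ 2 = 1 ->
  on_sphere n (vcomb a u b v).
Proof.
  intros [Hu0 Hu] [Hv0 Hv] Huv Hab. split.
  - intros i Hi. unfold vcomb. rewrite Hu0, Hv0 by assumption. ring.
  - rewrite dot_vcomb_l, !dot_vcomb_r, (dot_sym n v u), Hu, Hv, Huv. lra.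
Qed.

Lemma sin_pow2 u : sin u ^ 2 = 1 - cos u ^ 2.
Proof. rewrite <- (sin2_cos2 u). unfold Rsqr. ring. Qed.

Lemma sphere_in_plane n p y w R s :
  on_sphere n p -> on_sphere n y -> on_sphere n w -> 0 < sin R ->
  dot n p y = cos R -> dot n p w = cos s -> dot n w y = cos (s - R) ->
  w = vcomb (cos s) p (sin s) (vcomb (- cos R / sin R) p (1 / sin R) y).
Proof.
  intros Hp Hy Hw HR Hpy Hpw Hwy. assert (HR' : sin R <> 0) by lra.
  set (e := vcomb (- cos R / sin R) p (1 / sin R) y).
  assert (Hpe : dot n p e = 0).
  { unfold e. rewrite dot_vcomb_r, (proj2 Hp), Hpy. field. exact HR'. }
  assert (He : on_sphere n e).
  { split.
    - intros i Hi. unfold e, vcomb. rewrite (proj1 Hp i Hi), (proj1 Hy i Hi). ring.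
    - unfold e. rewrite dot_vcomb_l, !dot_vcomb_r, (proj2 Hp), (proj2 Hy), (dot_sym n y p), Hpy.
      transitivity ((1 - cos R ^ 2) / sin R ^ 2); [field; exact HR'|].
      rewrite <- sin_pow2. field. exact HR'. }
  apply (sphere_dot_eq1 n); auto.
  - apply on_sphere_vcomb; auto. rewrite sin_pow2. ring.
  - unfold e. rewrite !dot_vcomb_r, (dot_sym n w p), Hpw, Hwy, cos_minus.
    transitivity (cos s ^ 2 + sin s ^ 2); [field; exact HR'|].
    rewrite sin_pow2. ring.
Qed.

Lemma dot_ebasis_r n q i : (i <= n)%nat -> dot n q (ebasis i) = q i.
Proof.
  unfold dot, ebasis. induction n as [|n IH]; intros Hi; simpl.
  - replace i with 0%nat by lia. simpl. ring.
  - destruct (Nat.eq_dec i (S n)) as [->|Hne].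
    + rewrite Nat.eqb_refl, sum_eq_R0; [ring|].
      intros j Hj. destruct (Nat.eqb_spec (S n) j); [lia | ring].
    + rewrite IH by lia. destruct (Nat.eqb_spec i (S n)); [lia | ring].
Qed.

Lemma dot_shift_r n q x i t : (i <= n)%nat ->
  dot n q (fun j => x j + t * ebasis i j) = dot n q x + t * q i.
Proof.
  intros Hi. rewrite <- (dot_ebasis_r n q i Hi).
  transitivity (dot n q (vcomb 1 x t (ebasis i))).
  - apply sum_eq; intros; unfold vcomb; ring.
  - rewrite dot_vcomb_r. ring.
Qed.

Lemma dot_vnormalize_r n q z : dot n q (vnormalize n z) = dot n q z / sqrt (dot n z z).
Proof.
  unfold dot, Rdiv. rewrite (Rmult_comm (sum_f_R0 (fun i => q i * z i) n)), scal_sum.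
  apply sum_eq; intros; unfold vnormalize, dot, Rdiv; ring.
Qed.

Lemma dot_normalized_shift n q x i t : on_sphere n x -> (i <= n)%nat ->
  dot n q (vnormalize n (fun j => x j + t * ebasis i j)) =
  (dot n q x + t * q i) / sqrt (1 + 2 * t * x i + t ^ 2).
Proof.
  intros [_ Hx] Hi. set (z := fun j => x j + t * ebasis i j).
  assert (Hz : dot n z z = 1 + 2 * t * x i + t ^ 2).
  { unfold z at 2. rewrite dot_shift_r, dot_sym by exact Hi. unfold z.
    rewrite dot_shift_r, Hx by exact Hi.
    unfold ebasis. rewrite Nat.eqb_refl. ring. }
  rewrite dot_vnormalize_r, Hz. unfold z. rewrite dot_shift_r by exact Hi. reflexivity.
Qed.

Lemma is_derive_acos c : -1 < c < 1 -> is_derive acos c (-1 / sqrt (1 - c ^ 2)).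
Proof.
  intros Hc. apply is_derive_Reals.
  replace (c ^ 2) with c² by (unfold Rsqr; ring).
  apply (derive_pt_eq_1 _ _ _ (derivable_pt_acos c Hc)), derive_pt_acos.
Qed.

Lemma sgrad_gdist n q x : on_sphere n q -> on_sphere n x -> -1 < dot n q x < 1 ->
  sgrad n (gdist n q) x =
  vcomb (-1 / sqrt (1 - dot n q x ^ 2)) q (dot n q x / sqrt (1 - dot n q x ^ 2)) x.
Proof.
  intros Hq Hx Hc. set (c := dot n q x) in *. set (S := sqrt (1 - c ^ 2)).
  apply functional_extensionality; intros i. unfold sgrad, vcomb.
  destruct (Nat.leb_spec i n) as [Hi|Hi].
  2: { rewrite (proj1 Hq i Hi), (proj1 Hx i Hi). ring. }
  set (g := fun t => (c + t * q i) / sqrt (1 + 2 * t * x i + t ^ 2)).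
  assert (Hg0 : g 0 = c).
  { unfold g. replace (1 + 2 * 0 * x i + 0 ^ 2) with 1 by ring. rewrite sqrt_1. field. }
  assert (Hg : is_derive g 0 (q i - c * x i)).
  { unfold g. auto_derive.
    - replace (1 + 2 * 0 * x i + 0 * (0 * 1)) with 1 by ring. rewrite sqrt_1. lra.
    - replace (1 + 2 * 0 * x i + 0 * (0 * 1)) with 1 by ring. rewrite sqrt_1. field. }
  rewrite (Derive_ext _ (fun t => acos (g t))).
  2: { intros t. unfold gdist. rewrite dot_normalized_shift by assumption. reflexivity. }
  apply is_derive_unique.
  replace (-1 / S * q i + c / S * x i) with (scal (q i - c * x i) (-1 / S))
    by (unfold scal; simpl; unfold mult; simpl; unfold Rdiv; ring).
  apply (is_derive_comp acos g); [rewrite Hg0; now apply is_derive_acos | exact Hg].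
Qed.

Lemma continuous_of_ex_derive (f : R -> R) x : ex_derive f x -> continuous f x.
Proof. apply (ex_derive_continuous (V := R_NormedModule)). Qed.

Lemma I6_cos t : I6 t = 8 / 15 - cos t + 2 / 3 * cos t ^ 3 - 1 / 5 * cos t ^ 5.
Proof.
  set (F := fun u => - cos u + 2 / 3 * cos u ^ 3 - 1 / 5 * cos u ^ 5).
  assert (HF : is_RInt (fun s => sin s ^ 5) 0 t (minus (F t) (F 0))).
  { apply (is_RInt_derive (V := R_CompleteNormedModule) F).
    - intros u _. unfold F. auto_derive; [repeat split|].
      replace (sin u ^ 5) with (sin u * (sin u ^ 2) ^ 2) by ring.
      rewrite sin_pow2. field.
    - intros u _. apply continuous_of_ex_derive. auto_derive. repeat split. }
  unfold I6. rewrite (is_RInt_unique _ _ _ _ HF). unfold minus, plus, opp, F; simpl.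
  rewrite cos_0. field.
Qed.

Lemma on_sphere_vopp n q : on_sphere n q -> on_sphere n (vopp q).
Proof.
  intros [Hq0 Hq]. split.
  - intros i Hi. unfold vopp. rewrite Hq0 by exact Hi. ring.
  - rewrite dot_vopp_l, dot_sym, dot_vopp_l. lra.
Qed.

(* With [c = <q, x>]: [d_{-q}(x) = acos (-c)],
   [phi6 (acos (-c)) / sin (acos (-c)) = I6 (acos (-c)) / (1 - c^2)^3]
   and [I6 (acos (-c)) = (1 + c)^3 (3 c^2 - 9 c + 8) / 15]. *)
Definition psi_coef (c : R) : R := (3 * c ^ 2 - 9 * c + 8) / (15 * (1 - c) ^ 3).

Lemma Psi_vcomb n q x : on_sphere n q -> on_sphere n x -> dot n q x < 1 ->
  Psi n q x = vcomb (psi_coef (dot n q x)) q (- psi_coef (dot n q x) * dot n q x) x.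
Proof.
  intros Hq Hx Hc1. set (c := dot n q x) in *.
  pose proof (sphere_dot_bounds n q x Hq Hx) as Hb. fold c in Hb.
  assert (Hgd : gdist n (vopp q) x = acos (- c)) by (unfold gdist; rewrite dot_vopp_l; reflexivity).
  apply functional_extensionality; intros i. unfold Psi, Phi, vcomb. rewrite Hgd.
  destruct (Req_dec c (-1)) as [Hm|Hm].
  - rewrite Hm. replace (- -1) with 1 by ring. rewrite acos_1. unfold phi6.
    destruct (Req_EM_T 0 0) as [_|]; [|congruence].
    destruct (Nat.le_gt_cases i n) as [Hi|Hi].
    + rewrite (sphere_dot_eqm1 n q x Hq Hx Hm i Hi). ring.
    + rewrite (proj1 Hq i Hi), (proj1 Hx i Hi). ring.
  - assert (Hc : -1 < - c < 1) by lra.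
    rewrite sgrad_gdist by (try apply on_sphere_vopp; try rewrite dot_vopp_l; assumption).
    rewrite dot_vopp_l. fold c. unfold vcomb, vopp.
    pose proof (acos_bound_lt (- c) Hc) as Ha.
    unfold phi6. destruct (Req_EM_T (acos (- c)) 0) as [E|_]; [lra|].
    rewrite I6_cos, cos_acos, sin_acos by lra.
    replace ((- c)²) with (c ^ 2) by (unfold Rsqr; ring).
    replace ((- c) ^ 2) with (c ^ 2) by ring.
    set (S := sqrt (1 - c ^ 2)).
    assert (HS2 : S * S = 1 - c ^ 2) by (apply sqrt_sqrt; nra).
    assert (HS : S <> 0) by (intro E; rewrite E in HS2; nra).
    transitivity ((8 / 15 + c - 2 / 3 * c ^ 3 + 1 / 5 * c ^ 5) * (q i - c * x i) / (S * S) ^ 3).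
    { field. exact HS. }
    rewrite HS2. unfold psi_coef. field. split; [lra|]. intro. nra.
Qed.

Lemma dot_Psi_sgrad n p q x :
  on_sphere n p -> on_sphere n q -> on_sphere n x -> dot n q x < 1 -> -1 < dot n p x < 1 ->
  dot n (Psi n q x) (sgrad n (gdist n p) x) =
  - psi_coef (dot n q x) * (dot n q p - dot n p x * dot n q x) / sqrt (1 - dot n p x ^ 2).
Proof.
  intros Hp Hq Hx Hqx Hpx.
  rewrite Psi_vcomb, sgrad_gdist by assumption.
  rewrite dot_vcomb_l, !dot_vcomb_r, (proj2 Hx), (dot_sym n x p).
  unfold Rdiv. ring.
Qed.

Lemma is_RInt_mult_r (f : R -> R) a b l c :
  is_RInt f a b l -> is_RInt (fun s => f s * c) a b (l * c).
Proof.
  intros Hl. apply (is_RInt_ext (fun s => scal c (f s))).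
  - intros; unfold scal; simpl; unfold mult; simpl; ring.
  - replace (l * c) with (scal c l) by (unfold scal; simpl; unfold mult; simpl; ring).
    exact (is_RInt_scal f a b c l Hl).
Qed.

Lemma is_RInt_dot_l n (F : R -> vec) w a b :
  (forall i, (i <= n)%nat -> ex_RInt (fun s => F s i) a b) ->
  is_RInt (fun s => dot n (F s) w) a b (dot n (fun i => RInt (fun s => F s i) a b) w).
Proof.
  unfold dot. induction n as [|n IH]; intros HF; simpl.
  - apply is_RInt_mult_r, (RInt_correct (V := R_CompleteNormedModule)), HF. lia.
  - apply (is_RInt_plus (V := R_NormedModule)).
    + apply IH. intros; apply HF; lia.
    + apply is_RInt_mult_r, (RInt_correct (V := R_CompleteNormedModule)), HF. lia.
Qed.

Lemma nonincreasing_of_derive_nonpos (F dF : R -> R) a b : a <= b ->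
  (forall x, a <= x <= b -> is_derive F x (dF x)) ->
  (forall x, a <= x <= b -> dF x <= 0) -> F b <= F a.
Proof.
  intros Hab HD Hneg.
  destruct (MVT_gen F a b dF) as [c [Hc E]]; rewrite ?Rmin_left, ?Rmax_right in * by lra.
  - intros x Hx. apply HD. lra.
  - intros x Hx. apply continuity_pt_filterlim, continuous_of_ex_derive.
    eexists. apply HD. lra.
  - pose proof (Hneg c Hc). nra.
Qed.

Lemma abs_sub_le_of_derive (F dF G dG : R -> R) a b : a <= b ->
  (forall x, a <= x <= b -> is_derive F x (dF x)) ->
  (forall x, a <= x <= b -> is_derive G x (dG x)) ->
  (forall x, a <= x <= b -> Rabs (dF x) <= dG x) ->
  Rabs (F b - F a) <= G b - G a.
Proof.
  intros Hab HF HG Hle.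
  assert (Hup := nonincreasing_of_derive_nonpos
    (fun t => F t - G t) (fun t => dF t - dG t) a b Hab).
  assert (Hlo := nonincreasing_of_derive_nonpos
    (fun t => - F t - G t) (fun t => - dF t - dG t) a b Hab).
  apply Rabs_le. split.
  - enough (- F b - G b <= - F a - G a) by lra. apply Hlo.
    + intros x Hx. apply (is_derive_minus (fun t => - F t)); [apply (is_derive_opp F)|]; auto.
    + intros x Hx. destruct (proj1 (Rabs_le_between _ _) (Hle x Hx)). lra.
  - enough (F b - G b <= F a - G a) by lra. apply Hup.
    + intros x Hx. apply (is_derive_minus F); auto.
    + intros x Hx. destruct (proj1 (Rabs_le_between _ _) (Hle x Hx)). lra.
Qed.

Lemma continuous_of_abs_sub_le (F : R -> R) x0 M d : 0 < d ->
  (forall x, Rabs (x - x0) < d -> Rabs (F x - F x0) <= M * Rabs (x - x0)) ->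
  continuous F x0.
Proof.
  intros Hd HF. apply continuity_pt_filterlim. intros eps Heps.
  pose proof (Rabs_pos M) as HM. pose proof (Rle_abs M) as HMa.
  assert (Hdl : 0 < eps / (Rabs M + 1)) by (apply Rdiv_lt_0_compat; lra).
  exists (Rmin d (eps / (Rabs M + 1))). split; [now apply Rmin_pos|].
  intros x [_ Hx]. simpl in *. unfold Rdist in *.
  pose proof (Rmin_l d (eps / (Rabs M + 1))). pose proof (Rmin_r d (eps / (Rabs M + 1))).
  assert (Hlt : Rabs (x - x0) * (Rabs M + 1) < eps) by (apply Rlt_div_r; lra).
  pose proof (HF x ltac:(lra)). pose proof (Rabs_pos (x - x0)). nra.
Qed.

(* Carathéodory: the difference quotient extends continuously by 0 at [x0]. *)
Lemma is_derive_0_of_abs_sub_le (F : R -> R) x0 M d : 0 < d ->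
  (forall x, Rabs (x - x0) < d -> Rabs (F x - F x0) <= M * (x - x0) ^ 2) ->
  is_derive F x0 0.
Proof.
  intros Hd HF. set (Q := fun x => (F x - F x0) / (x - x0)).
  assert (HQ0 : Q x0 = 0) by (unfold Q; rewrite Rminus_diag; unfold Rdiv; ring).
  assert (HQ : continuity_pt Q x0).
  { apply continuity_pt_filterlim, (continuous_of_abs_sub_le Q x0 M d Hd).
    intros x Hx. rewrite HQ0, Rminus_0_r. unfold Q.
    destruct (Req_dec x x0) as [->|Hne].
    - rewrite !Rminus_diag, Rdiv_0_r, Rabs_R0, Rmult_0_r. lra.
    - assert (Hn : 0 < Rabs (x - x0)) by (apply Rabs_pos_lt; lra).
      unfold Rdiv. rewrite Rabs_mult, Rabs_inv.
      apply (Rmult_le_reg_r (Rabs (x - x0))); [exact Hn|].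
      rewrite Rmult_assoc, Rinv_l, Rmult_1_r by lra.
      replace (M * Rabs (x - x0) * Rabs (x - x0)) with (M * (x - x0) ^ 2)
        by (rewrite <- pow2_abs; ring).
      apply HF, Hx. }
  apply is_derive_Reals. intros eps Heps.
  destruct (HQ eps Heps) as [alp [Halp HQe]].
  exists (mkposreal alp Halp). intros h Hh Hha. simpl in Hha.
  specialize (HQe (x0 + h)). rewrite HQ0 in HQe.
  unfold Q, D_x, no_cond, dist in HQe; simpl in HQe; unfold Rdist in HQe.
  replace (x0 + h - x0) with h in HQe by ring. rewrite Rminus_0_r in HQe.
  rewrite Rminus_0_r. apply HQe. split; [split; [exact I | lra] | exact Hha].
Qed.

Lemma sin_le_PI_minus x : PI / 2 <= x <= PI -> 0 <= sin x <= PI - x.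
Proof.
  intros Hx. rewrite <- sin_PI_x. split.
  - apply sin_ge_0; lra.
  - destruct (Req_dec x PI) as [->|Hne].
    + rewrite Rminus_diag, sin_0. lra.
    + left. apply sin_lt_x. lra.
Qed.

Lemma abs_div_le u w B d : 0 < d <= w -> Rabs u <= B -> Rabs (u / w) <= B / d.
Proof.
  intros Hd Hu. unfold Rdiv. rewrite Rabs_mult, Rabs_inv, (Rabs_pos_eq w) by lra.
  apply Rmult_le_compat; [apply Rabs_pos | left; apply Rinv_0_lt_compat; lra | exact Hu |].
  apply Rinv_le_contravar; lra.
Qed.

Definition gdot (r a s : R) : R := r * cos s + a * sin s.

(* [f2] is unconstrained on [[PI, +oo)]: [h] and the primitive [primW] are cut off there, so that
   they become continuous (resp. differentiable) at [PI]. *)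
Definition htrunc (f2 : R -> R) (s : R) : R := if Rlt_dec s PI then f2 s * sin s ^ 3 else 0.

Definition primW (f1 f2 : R -> R) (r a s : R) : R :=
  sin s ^ 4 / 15 * (f1 s / (1 - gdot r a s) + f2 s / (1 - gdot r a s) ^ 2).

Definition primW_trunc (f1 f2 : R -> R) (r a s : R) : R :=
  if Rlt_dec s PI then primW f1 f2 r a s else 0.

Definition radial_weight (r a s : R) : R := (cos s - gdot r a s * r) * psi_coef (gdot r a s).

Section Ode.

Variables (f1 f2 : R -> R) (r : R).
Hypothesis r_unit : 0 <= r <= 1.
Hypothesis f1_ode : forall s, 0 < s < PI ->
  is_derive f1 s ((- 3 * cos s * f1 s + 3 * cos s * f2 s) / sin s).
Hypothesis f2_ode : forall s, 0 < s < PI ->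
  is_derive f2 s (((r - cos s) * f1 s + (cos s - r) * f2 s) / sin s).

Lemma is_derive_weighted_diff s : 0 < s < PI ->
  is_derive (fun t => (f1 t - f2 t) * sin t ^ 2) s (- r * ((f1 s - f2 s) * sin s ^ 2) / sin s).
Proof.
  intros Hs. assert (Hsin : sin s <> 0) by (apply Rgt_not_eq, sin_gt_0; lra).
  pose proof (f1_ode s Hs) as D1. pose proof (f2_ode s Hs) as D2.
  auto_derive.
  - split; [eexists; exact D1 | split; [eexists; exact D2 | exact I]].
  - change (fun x => f1 x) with f1; change (fun x => f2 x) with f2.
    rewrite (is_derive_unique _ _ _ D1), (is_derive_unique _ _ _ D2). field. exact Hsin.
Qed.

Lemma weighted_diff_bound s0 s : 0 < s0 -> s0 <= s < PI ->
  Rabs ((f1 s - f2 s) * sin s ^ 2) <= Rabs ((f1 s0 - f2 s0) * sin s0 ^ 2).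
Proof.
  intros Hs0 Hs. set (v := fun t => (f1 t - f2 t) * sin t ^ 2).
  change (Rabs (v s) <= Rabs (v s0)). apply Rsqr_le_abs_0. rewrite !Rsqr_pow2.
  apply (nonincreasing_of_derive_nonpos
    (fun t => v t ^ 2) (fun t => 2 * v t * (- r * v t / sin t)));
    [lra | intros x Hx ..].
  - replace (2 * v x * (- r * v x / sin x)) with (INR 2 * (- r * v x / sin x) * v x ^ pred 2)
      by (simpl; ring).
    apply is_derive_pow, is_derive_weighted_diff. lra.
  - assert (Hsin : 0 < sin x) by (apply sin_gt_0; lra).
    assert (0 <= r * (v x * v x) * / sin x)
      by (apply Rmult_le_pos; [nra | left; apply Rinv_0_lt_compat, Hsin]).
    unfold Rdiv. nra.
Qed.

(* [f2' = (r - cos s) v / sin s ^ 3] with [|v| <= V], and this is dominated by the derivative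
   [2 V (1 + cos s ^ 2) / sin s ^ 3] of [-2 V cos s / sin s ^ 2]. *)
Lemma f2_oscillation_bound s0 s : 0 < s0 -> s0 <= s < PI ->
  let V := Rabs ((f1 s0 - f2 s0) * sin s0 ^ 2) in
  Rabs (f2 s - f2 s0) <= 2 * V / sin s ^ 2 + 2 * V / sin s0 ^ 2.
Proof.
  intros Hs0 Hs V.
  assert (Hsin : forall x, s0 <= x <= s -> 0 < sin x) by (intros; apply sin_gt_0; lra).
  assert (HV : 0 <= V) by apply Rabs_pos.
  set (G := fun t => - 2 * V * cos t / sin t ^ 2).
  assert (HG : Rabs (f2 s - f2 s0) <= G s - G s0).
  { apply (abs_sub_le_of_derive f2 (fun x => (r - cos x) * ((f1 x - f2 x) * sin x ^ 2) / sin x ^ 3)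
      G (fun x => 2 * V * (1 + cos x ^ 2) / sin x ^ 3)); [lra | intros x Hx ..];
      pose proof (Hsin x Hx) as Hsx; assert (Hsx' : sin x <> 0) by lra.
    - replace ((r - cos x) * ((f1 x - f2 x) * sin x ^ 2) / sin x ^ 3)
        with (((r - cos x) * f1 x + (cos x - r) * f2 x) / sin x) by (field; exact Hsx').
      apply f2_ode. lra.
    - unfold G. auto_derive; [apply Rgt_not_eq; nra|].
      replace (1 + cos x ^ 2) with (sin x ^ 2 + 2 * cos x ^ 2) by (rewrite sin_pow2; ring).
      field. exact Hsx'.
    - pose proof (weighted_diff_bound s0 x Hs0 ltac:(lra)) as Hv. fold V in Hv.
      assert (Hrc : Rabs (r - cos x) <= 2) by (apply Rabs_le; pose proof (COS_bound x); lra).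
      unfold Rdiv. rewrite Rabs_mult, Rabs_mult, (Rabs_pos_eq (/ _)).
      2: { left. apply Rinv_0_lt_compat, pow_lt. assumption. }
      apply Rmult_le_compat_r; [left; apply Rinv_0_lt_compat, pow_lt; assumption|].
      pose proof (Rabs_pos (r - cos x)). pose proof (pow2_ge_0 (cos x)). nra. }
  assert (Hc : forall t, s0 <= t <= s -> - (2 * V / sin t ^ 2) <= G t <= 2 * V / sin t ^ 2).
  { intros t Ht. apply Rabs_le_between. unfold G, Rdiv.
    rewrite Rabs_mult, (Rabs_pos_eq (/ _)) by (left; apply Rinv_0_lt_compat, pow_lt, Hsin, Ht).
    apply Rmult_le_compat_r; [left; apply Rinv_0_lt_compat, pow_lt, Hsin, Ht|].
    replace (-2 * V * cos t) with (- (2 * V * cos t)) by ring.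
    rewrite Rabs_Ropp, Rabs_mult, (Rabs_pos_eq (2 * V)) by lra.
    assert (Rabs (cos t) <= 1) by apply Rabs_le, COS_bound.
    pose proof (Rabs_pos (cos t)). nra. }
  pose proof (Hc s ltac:(lra)). pose proof (Hc s0 ltac:(lra)). lra.
Qed.

Lemma ode_solution_bound s0 : 0 < s0 < PI -> exists K, 0 <= K /\
  forall s, s0 <= s < PI -> Rabs (f1 s) <= K / sin s ^ 2 /\ Rabs (f2 s) <= K / sin s ^ 2.
Proof.
  intros Hs0. set (V := Rabs ((f1 s0 - f2 s0) * sin s0 ^ 2)).
  set (C := Rabs (f2 s0) + 2 * V / sin s0 ^ 2).
  assert (HV : 0 <= V) by apply Rabs_pos.
  assert (HC : 0 <= C).
  { pose proof (Rabs_pos (f2 s0)). pose proof (sin_gt_0 s0 ltac:(lra) ltac:(lra)).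
    assert (0 <= 2 * V / sin s0 ^ 2) by (apply Rle_mult_inv_pos; [lra | apply pow_lt; lra]).
    unfold C. lra. }
  exists (C + 3 * V). split; [lra|]. intros s Hs.
  pose proof (sin_gt_0 s ltac:(lra) ltac:(lra)) as Hsin.
  set (t := / sin s ^ 2).
  assert (Ht : 1 <= t).
  { unfold t. rewrite <- Rinv_1. apply Rinv_le_contravar; [apply pow_lt; lra|].
    pose proof (SIN_bound s). nra. }
  unfold Rdiv. fold t.
  pose proof (f2_oscillation_bound s0 s ltac:(lra) Hs) as H2. fold V in H2.
  unfold Rdiv in H2. fold t in H2.
  assert (Hf2 : Rabs (f2 s) <= C + 2 * V * t).
  { unfold C, Rdiv. pose proof (Rabs_triang_inv (f2 s) (f2 s0)). lra. }
  assert (Hf1 : Rabs (f1 s) <= Rabs (f2 s) + V * t).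
  { replace (f1 s) with (f2 s + (f1 s - f2 s) * sin s ^ 2 * t)
      by (unfold t; field; apply Rgt_not_eq, Hsin).
    eapply Rle_trans; [apply Rabs_triang|]. apply Rplus_le_compat_l.
    rewrite Rabs_mult, (Rabs_pos_eq t) by lra.
    apply Rmult_le_compat_r; [lra|]. apply weighted_diff_bound; lra. }
  split; nra.
Qed.

Lemma is_derive_primW a s : 0 < s < PI -> gdot r a s <> 1 ->
  is_derive (primW f1 f2 r a) s (f2 s * sin s ^ 3 * (radial_weight r a s - r / 5)).
Proof.
  intros Hs Hc. pose proof (f1_ode s Hs) as D1. pose proof (f2_ode s Hs) as D2.
  assert (HS : sin s <> 0) by (apply Rgt_not_eq, sin_gt_0; lra).
  assert (Hc' : 1 - (r * cos s + a * sin s) <> 0) by (unfold gdot in Hc; lra).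
  unfold primW, radial_weight, gdot, psi_coef. auto_derive.
  - repeat split; auto; eexists; eassumption.
  - change (fun x => f1 x) with f1; change (fun x => f2 x) with f2.
    rewrite (is_derive_unique _ _ _ D1), (is_derive_unique _ _ _ D2).
    (* The two sides agree modulo [sin s ^ 2 + cos s ^ 2 = 1]. *)
    match goal with |- _ = ?R => transitivity (R + (sin s ^ 2 + cos s ^ 2 - 1) *
      (r * sin s ^ 4 * (f1 s * ((r * cos s + a * sin s) - 1) - 2 * f2 s)) /
      (15 * sin s * (1 - (r * cos s + a * sin s)) ^ 3)) end.
    + field. auto.
    + rewrite (sin_pow2 s). field. auto.
Qed.

Lemma htrunc_continuous s : 0 < s <= PI -> continuous (htrunc f2) s.
Proof.
  intros Hs. destruct (Req_dec s PI) as [->|Hne].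
  - destruct (ode_solution_bound (PI / 2)) as [K [HK HB]];
      [pose proof PI_RGT_0; lra|].
    apply (continuous_of_abs_sub_le _ PI K (PI / 2)); [pose proof PI_RGT_0; lra|].
    intros x Hx. unfold htrunc. destruct (Rlt_dec PI PI) as [|_]; [lra|].
    destruct (Rlt_dec x PI) as [Hlt|Hge].
    2: { rewrite Rminus_diag, Rabs_R0. apply Rmult_le_pos; [exact HK | apply Rabs_pos]. }
    apply Rabs_lt_between' in Hx.
    destruct (sin_le_PI_minus x ltac:(lra)) as [S0 S1].
    assert (Sp : 0 < sin x) by (apply sin_gt_0; lra).
    destruct (HB x ltac:(lra)) as [_ B2].
    rewrite Rminus_0_r, Rabs_mult, (Rabs_pos_eq (sin x ^ 3)), (Rabs_left (x - PI))
      by (try apply pow_le; lra).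
    apply (Rle_trans _ (K / sin x ^ 2 * sin x ^ 3)).
    + apply Rmult_le_compat_r; [apply pow_le; lra | exact B2].
    + replace (K / sin x ^ 2 * sin x ^ 3) with (K * sin x) by (field; lra).
      apply Rmult_le_compat_l; lra.
  - apply (continuous_ext_loc _ (fun t => f2 t * sin t ^ 3)).
    + apply (filter_imp (fun t => t < PI)); [|apply (open_lt PI s); lra].
      intros t Ht. unfold htrunc. destruct (Rlt_dec t PI); [reflexivity | lra].
    + apply continuous_of_ex_derive. auto_derive.
      eexists. apply f2_ode. lra.
Qed.

Lemma primW_bound_near_PI a : a < 1 -> exists M, 0 <= M /\
  forall x, PI / 2 <= x < PI -> Rabs (primW f1 f2 r a x) <= M * sin x ^ 2.
Proof.
  intros Ha. pose proof PI_RGT_0.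
  destruct (ode_solution_bound (PI / 2)) as [K [HK HB]]; [lra|].
  set (d := 1 - Rmax a 0).
  assert (Hd : 0 < d) by (unfold d; apply Rmax_case; lra).
  exists (K * (1 / d + 1 / d ^ 2) / 15). split.
  { apply Rmult_le_pos; [apply Rmult_le_pos|]; try lra.
    pose proof (Rdiv_lt_0_compat 1 d ltac:(lra) Hd).
    pose proof (Rdiv_lt_0_compat 1 (d ^ 2) ltac:(lra) (pow_lt d 2 Hd)). lra. }
  intros x Hx. destruct (HB x Hx) as [B1 B2].
  assert (Hsin : 0 < sin x) by (apply sin_gt_0; lra).
  assert (Hg : d <= 1 - gdot r a x).
  { assert (cos x <= 0) by (apply cos_le_0; lra). pose proof (SIN_bound x).
    unfold d, gdot. pose proof (Rmax_l a 0). pose proof (Rmax_r a 0). nra. }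
  assert (T1 := abs_div_le (f1 x) (1 - gdot r a x) _ d ltac:(lra) B1).
  assert (T2 := abs_div_le (f2 x) ((1 - gdot r a x) ^ 2) _ (d ^ 2)
    ltac:(split; [apply pow_lt | apply pow_incr]; lra) B2).
  unfold primW. rewrite Rabs_mult, (Rabs_pos_eq (sin x ^ 4 / 15))
    by (apply Rmult_le_pos; [apply pow_le | ]; lra).
  eapply Rle_trans.
  - apply Rmult_le_compat_l; [apply Rmult_le_pos; [apply pow_le|]; lra|].
    eapply Rle_trans; [apply Rabs_triang | apply Rplus_le_compat; eassumption].
  - apply Req_le. field. split; apply Rgt_not_eq; lra.
Qed.

Lemma is_derive_primW_trunc_PI a : a < 1 -> is_derive (primW_trunc f1 f2 r a) PI 0.
Proof.
  intros Ha. destruct (primW_bound_near_PI a Ha) as [M [HM HW]].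
  apply (is_derive_0_of_abs_sub_le _ PI M (PI / 2)); [pose proof PI_RGT_0; lra|].
  intros x Hx. apply Rabs_lt_between' in Hx. unfold primW_trunc.
  destruct (Rlt_dec PI PI); [lra|]. rewrite Rminus_0_r.
  destruct (Rlt_dec x PI) as [Hlt|_].
  - destruct (sin_le_PI_minus x) as [S0 S1]; [lra|].
    eapply Rle_trans; [apply HW; lra|]. apply Rmult_le_compat_l; [exact HM|].
    replace ((x - PI) ^ 2) with ((PI - x) ^ 2) by ring. apply pow_incr. lra.
  - rewrite Rabs_R0. apply Rmult_le_pos; [exact HM | apply pow2_ge_0].
Qed.

Lemma is_RInt_htrunc_shifted_weight a s0 : 0 < s0 < PI -> a < 1 ->
  (forall s, s0 <= s <= PI -> gdot r a s < 1) ->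
  is_RInt (fun s => htrunc f2 s * (radial_weight r a s - r / 5)) s0 PI (- primW f1 f2 r a s0).
Proof.
  intros Hs0 Ha Hg.
  replace (- primW f1 f2 r a s0)
    with (minus (primW_trunc f1 f2 r a PI) (primW_trunc f1 f2 r a s0)).
  2: { unfold minus, plus, opp, primW_trunc; simpl.
       destruct (Rlt_dec PI PI); [lra|]. destruct (Rlt_dec s0 PI); [ring | lra]. }
  apply (is_RInt_derive (V := R_CompleteNormedModule));
    rewrite Rmin_left, Rmax_right by lra; intros x Hx.
  - destruct (Req_dec x PI) as [->|Hne].
    + unfold htrunc. destruct (Rlt_dec PI PI); [lra|]. rewrite Rmult_0_l.
      now apply is_derive_primW_trunc_PI.
    + apply (is_derive_ext_loc (primW f1 f2 r a)).
      * apply (filter_imp (fun t => t < PI)); [|apply (open_lt PI x); lra].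
        intros t Ht. unfold primW_trunc. destruct (Rlt_dec t PI); [reflexivity | lra].
      * unfold htrunc. destruct (Rlt_dec x PI); [|lra].
        apply is_derive_primW; [lra|]. pose proof (Hg x Hx). lra.
  - apply (continuous_mult (K := R_AbsRing)); [apply htrunc_continuous; lra|].
    pose proof (Hg x Hx). apply continuous_of_ex_derive.
    unfold radial_weight, psi_coef, gdot in *. auto_derive.
    repeat split; try exact I. repeat apply Rmult_integral_contrapositive_currified; lra.
Qed.

Lemma is_RInt_htrunc_radial_weight a s0 : 0 < s0 < PI -> a < 1 ->
  (forall s, s0 <= s <= PI -> gdot r a s < 1) ->
  is_RInt (fun s => htrunc f2 s * radial_weight r a s) s0 PI
    (RInt (htrunc f2) s0 PI * (r / 5) - primW f1 f2 r a s0).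
Proof.
  intros Hs0 Ha Hg.
  apply (is_RInt_ext
    (fun s => htrunc f2 s * (r / 5) + htrunc f2 s * (radial_weight r a s - r / 5))).
  - intros s _. simpl. ring.
  - apply (is_RInt_plus (V := R_NormedModule)).
    + apply is_RInt_mult_r, (RInt_correct (V := R_CompleteNormedModule)).
      apply (ex_RInt_continuous (V := R_CompleteNormedModule)).
      rewrite Rmin_left, Rmax_right by lra. intros s Hs. apply htrunc_continuous. lra.
    + now apply is_RInt_htrunc_shifted_weight.
Qed.

End Ode.

Lemma acute_cos_sin R : 0 < R < PI / 2 -> (0 < cos R < 1) /\ 0 < sin R.
Proof.
  intros HR. assert (Hs : 0 < sin R) by (apply sin_gt_0; lra).
  assert (Hc : 0 < cos R) by (apply cos_gt_0; lra).
  pose proof (sin_pow2 R). repeat split; nra.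
Qed.

Section Boundary.

Variables (n : nat) (p y x : vec) (gamma : R -> vec) (Rr : R).
Hypothesis p_sphere : on_sphere n p.
Hypothesis Rr_range : 0 < Rr < PI / 2.
Hypothesis y_sphere : on_sphere n y.
Hypothesis p_y : gdist n p y = Rr.
Hypothesis gamma_sphere : forall s, Rr <= s <= PI -> on_sphere n (gamma s).
Hypothesis gamma_Rr : gamma Rr = y.
Hypothesis gamma_isometry : forall s t, Rr <= s <= PI -> Rr <= t <= PI ->
  gdist n (gamma s) (gamma t) = Rabs (s - t).
Hypothesis p_gamma : forall s, Rr <= s <= PI -> gdist n p (gamma s) = s.
Hypothesis x_sphere : on_sphere n x.
Hypothesis p_x : gdist n p x = Rr.
Hypothesis x_neq_y : x <> y.

Let r := cos Rr.
Let a := (dot n x y - r ^ 2) / sin Rr.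

Lemma dot_p_x : dot n p x = r.
Proof. rewrite <- cos_gdist, p_x by assumption. reflexivity. Qed.

Lemma dot_x_y_lt_1 : dot n x y < 1.
Proof.
  destruct (sphere_dot_bounds n x y x_sphere y_sphere) as [_ [Hlt|Heq]]; [exact Hlt|].
  exfalso. exact (x_neq_y (sphere_dot_eq1 n x y x_sphere y_sphere Heq)).
Qed.

Lemma gamma_in_plane s : Rr <= s <= PI ->
  gamma s = vcomb (cos s) p (sin s) (vcomb (- r / sin Rr) p (1 / sin Rr) y).
Proof.
  intros Hs. apply (sphere_in_plane n); auto.
  - exact (proj2 (acute_cos_sin Rr Rr_range)).
  - rewrite <- cos_gdist, p_y by assumption. reflexivity.
  - rewrite <- cos_gdist, p_gamma by auto. reflexivity.
  - rewrite <- cos_gdist, <- gamma_Rr, gamma_isometry, Rabs_pos_eq by (auto; lra).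
    reflexivity.
Qed.

Lemma dot_gamma_x s : Rr <= s <= PI -> dot n (gamma s) x = gdot r a s.
Proof.
  intros Hs. destruct (acute_cos_sin Rr Rr_range) as [Hr HsR]; fold r in Hr.
  rewrite gamma_in_plane, !dot_vcomb_l, dot_p_x, (dot_sym n y x) by exact Hs.
  unfold gdot, a. field. lra.
Qed.

Lemma gdot_lt_1 s : Rr <= s <= PI -> gdot r a s < 1.
Proof.
  intros Hs. rewrite <- dot_gamma_x by exact Hs.
  destruct (sphere_dot_bounds n _ x (gamma_sphere s Hs) x_sphere) as [_ [Hlt|Heq]]; [exact Hlt|].
  exfalso. apply x_neq_y.
  pose proof (sphere_dot_eq1 n _ x (gamma_sphere s Hs) x_sphere Heq) as Hgx.
  assert (s = Rr) as -> by (rewrite <- (p_gamma s Hs), Hgx; exact p_x).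
  rewrite <- gamma_Rr. symmetry. exact Hgx.
Qed.

Lemma sqrt_1_minus_r2 : sqrt (1 - r ^ 2) = sin Rr.
Proof.
  unfold r. rewrite <- sin_pow2. apply sqrt_pow2.
  destruct (acute_cos_sin Rr Rr_range) as [_ HsR]. lra.
Qed.

Lemma slope_lt_1 : a < 1.
Proof.
  destruct (acute_cos_sin Rr Rr_range) as [Hr HsR]; fold r in Hr. pose proof dot_x_y_lt_1.
  assert (Hs : sin Rr ^ 2 = 1 - r ^ 2) by apply sin_pow2.
  apply (Rmult_lt_reg_r (sin Rr)); [assumption|]. unfold a, Rdiv.
  rewrite Rmult_assoc, Rinv_l, Rmult_1_r by lra. nra.
Qed.

Lemma dot_Psi_y_sgrad :
  dot n (Psi n y x) (sgrad n (gdist n p) x) =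
  - psi_coef (dot n x y) * (r - r * dot n x y) / sin Rr.
Proof.
  destruct (acute_cos_sin Rr Rr_range) as [Hr HsR]; fold r in Hr. pose proof dot_x_y_lt_1.
  assert (Hpy : dot n y p = r) by (rewrite dot_sym, <- cos_gdist, p_y; auto).
  rewrite dot_Psi_sgrad, dot_p_x, (dot_sym n y x), Hpy, sqrt_1_minus_r2; auto.
  - rewrite dot_sym. assumption.
  - rewrite dot_p_x. lra.
Qed.

Lemma dot_Psi_gamma_sgrad s : Rr <= s <= PI ->
  dot n (Psi n (gamma s) x) (sgrad n (gdist n p) x) = radial_weight r a s * (-1 / sin Rr).
Proof.
  intros Hs. destruct (acute_cos_sin Rr Rr_range) as [Hr HsR]; fold r in Hr.
  pose proof (gdot_lt_1 s Hs).
  assert (Hgp : dot n (gamma s) p = cos s).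
  { rewrite dot_sym, <- cos_gdist, p_gamma; auto. }
  rewrite dot_Psi_sgrad, dot_p_x, dot_gamma_x, Hgp, sqrt_1_minus_r2; auto.
  - unfold radial_weight. field. lra.
  - rewrite dot_gamma_x; auto.
  - rewrite dot_p_x. lra.
Qed.

Lemma dot_Zfield_sgrad (h ht : R -> R) :
  (forall s, Rr <= s <= PI -> continuous ht s) -> (forall s, Rr < s < PI -> h s = ht s) ->
  dot n (Zfield n y gamma h Rr x) (sgrad n (gdist n p) x) =
  - psi_coef (dot n x y) * (r - r * dot n x y) / sin Rr +
  RInt (fun s => ht s * radial_weight r a s * (-1 / sin Rr)) Rr PI.
Proof.
  intros Hht Hh. unfold Zfield. rewrite dot_add_l, dot_Psi_y_sgrad. f_equal.
  symmetry. apply is_RInt_unique.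
  apply (is_RInt_ext (fun s => dot n (fun i => h s * Psi n (gamma s) x i) (sgrad n (gdist n p) x))).
  - rewrite Rmin_left, Rmax_right by lra. intros s Hs.
    simpl. rewrite dot_scal_l, dot_Psi_gamma_sgrad, Hh by lra. ring.
  - apply is_RInt_dot_l. intros i Hi.
    set (e := vcomb (- r / sin Rr) p (1 / sin Rr) y).
    apply (ex_RInt_ext (fun s => ht s * (psi_coef (gdot r a s) * (cos s * p i + sin s * e i)
      - psi_coef (gdot r a s) * gdot r a s * x i))).
    + rewrite Rmin_left, Rmax_right by lra. intros s Hs.
      assert (Hs' : Rr <= s <= PI) by lra. pose proof (gdot_lt_1 s Hs').
      rewrite Hh, Psi_vcomb, dot_gamma_x by (rewrite ?dot_gamma_x; auto).
      unfold vcomb at 1. rewrite (gamma_in_plane s Hs'). unfold vcomb at 1. fold e. simpl. ring.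
    + apply (ex_RInt_continuous (V := R_CompleteNormedModule)).
      rewrite Rmin_left, Rmax_right by lra. intros s Hs.
      apply (continuous_mult (K := R_AbsRing)); [now apply Hht|].
      pose proof (gdot_lt_1 s Hs). apply continuous_of_ex_derive.
      unfold gdot, psi_coef in *. auto_derive.
      repeat split; try exact I; repeat apply Rmult_integral_contrapositive_currified; lra.
Qed.

End Boundary.

(* [5 (1 - B) psi_coef B = 1 + 1 / (1 - B) + 2 / (3 (1 - B)^2)], and with the initial values of
   [f] the primitive at [R] cancels exactly the last two terms. *)
Lemma boundary_identity r sR B J f1R f2R :
  0 < r -> 0 < sR -> B < 1 -> f1R * sR ^ 4 = r * 3 -> f2R * sR ^ 4 = r * 2 ->
  - 5 * (sR / r) *
    (- psi_coef B * (r - r * B) / sR +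
     (J * (r / 5) - sR ^ 4 / 15 * (f1R / (1 - B) + f2R / (1 - B) ^ 2)) * (-1 / sR))
  = 1 + J.
Proof.
  intros Hr HsR HB H1 H2.
  transitivity (5 * (1 - B) * psi_coef B + J
    - (f1R * sR ^ 4 / (1 - B) + f2R * sR ^ 4 / (1 - B) ^ 2) / (3 * r)).
  - field. repeat split; lra.
  - rewrite H1, H2. unfold psi_coef. field. split; lra.
Qed.

Theorem lemma3p5 (n : nat) (p y : vec) (Rr : R) (gamma : R -> vec)
  (f1 f2 : R -> R) :
  on_sphere n p ->
  0 < Rr < PI / 2 ->
  (* y on the boundary of B_R = {q | d_p(q) <= R} *)
  on_sphere n y -> gdist n p y = Rr ->
  (* gamma : [R, pi] -> S^n unit-speed minimizing geodesic from y to -p,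
     with d_p(gamma s) = s *)
  (forall s, Rr <= s <= PI -> on_sphere n (gamma s)) ->
  gamma Rr = y -> gamma PI = vopp p ->
  (forall s t, Rr <= s <= PI -> Rr <= t <= PI ->
     gdist n (gamma s) (gamma t) = Rabs (s - t)) ->
  (forall s, Rr <= s <= PI -> gdist n p (gamma s) = s) ->
  (* f = (f1, f2) solves the linear ODE on (0, pi) with the given value at R *)
  (forall s, 0 < s < PI ->
     is_derive f1 s ((- 3 * cos s * f1 s + 3 * cos s * f2 s) / sin s)) ->
  (forall s, 0 < s < PI ->
     is_derive f2 s (((cos Rr - cos s) * f1 s + (cos s - cos Rr) * f2 s) / sin s)) ->
  f1 Rr * sin Rr ^ 4 = cos Rr * 3 ->
  f2 Rr * sin Rr ^ 4 = cos Rr * 2 ->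
  forall x : vec,
    on_sphere n x -> gdist n p x = Rr -> x <> y ->
    - 5 * tan Rr *
      dot n (Zfield n y gamma (fun s => f2 s * sin s ^ 3) Rr x)
            (sgrad n (gdist n p) x)
    = 1 + RInt (fun s => f2 s * sin s ^ 3) Rr PI.
Proof.
  (* [gamma PI = -p] already follows from [d_p (gamma PI) = PI]. *)
  intros Hp HR Hy Hpy Hgs HgR _ Hiso Hpg D1 D2 I1 I2 x Hx Hpx Hxy.
  destruct (acute_cos_sin Rr HR) as [Hr HsR].
  assert (Hh : forall s, Rr < s < PI -> f2 s * sin s ^ 3 = htrunc f2 s).
  { intros s Hs. unfold htrunc. destruct (Rlt_dec s PI); [reflexivity | lra]. }
  assert (Hcont : forall s, Rr <= s <= PI -> continuous (htrunc f2) s).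
  { intros s Hs. apply (htrunc_continuous f1 f2 (cos Rr)); auto; lra. }
  rewrite (dot_Zfield_sgrad n p y x gamma Rr Hp HR Hy Hpy Hgs HgR Hiso Hpg Hx Hpx Hxy _ _ Hcont Hh).
  set (r := cos Rr) in *. set (a := (dot n x y - r ^ 2) / sin Rr).
  assert (HI := is_RInt_htrunc_radial_weight f1 f2 r ltac:(lra) D1 D2 a Rr ltac:(lra)
    (slope_lt_1 n y x Rr HR Hy Hx Hxy)
    (gdot_lt_1 n p y x gamma Rr Hp HR Hy Hpy Hgs HgR Hiso Hpg Hx Hpx Hxy)).
  rewrite (is_RInt_unique _ _ _ _ (is_RInt_mult_r _ _ _ _ (-1 / sin Rr) HI)).
  rewrite (RInt_ext (fun s => f2 s * sin s ^ 3) (htrunc f2))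
    by (rewrite Rmin_left, Rmax_right by lra; exact Hh).
  unfold primW. replace (gdot r a Rr) with (dot n x y) by (unfold gdot, a, r; field; lra).
  unfold tan. apply boundary_identity; try lra.
  exact (dot_x_y_lt_1 n y x Hy Hx Hxy).
Qed.
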